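(* Let $G$ be a finite group, $I$ a set, and $H=G^I$. Suppose that $f(a,b)=b$ for some $a,b\in G$ and some homogeneous monomial $f:G^2\to G$, and let $N$ be the normal subgroup of $G$ generated by $b$. Let $(X_m)_{m\in\mathbf{N}}$ be an increasing sequence of subsets of $H$ such that $\mathcal{G}(X_m)\subseteq X_{m+1}$ for all $m$ and $\bigcup_m X_m=H$. Then $N^I\subseteq X_m$ for all $m$ large enough.
   Context: For a subset $X$ of a group, $\mathcal{G}(X)=X\cup\{1\}\cup\{x^{-1}: x\in X\}\cup\{xy : x,y\in X\}$. For $n\in\mathbf{N}$, the set of functions $G^n\to G$ is a group under pointwise multiplication; its elements lying in the subgroup generated by the constant functions and the coordinate projections are called monomials. A monomial $m$ is homogeneous if $m(g_1,\dots,g_n)=1$ whenever at least one $g_i$ equals $1$. *)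

From HB Require Import structures.
From mathcomp Require Import all_boot all_fingroup.
Set Implicit Arguments. Unset Strict Implicit. Unset Printing Implicit Defensive.
Local Open Scope group_scope.

Inductive monomial (gT : finGroupType) (n : nat) :
    ({ffun 'I_n -> gT} -> gT) -> Prop :=
| mon_const (c : gT) : monomial (fun _ => c)
| mon_proj (i : 'I_n) : monomial (fun g => g i)
| mon_mul f1 f2 : monomial f1 -> monomial f2 -> monomial (fun g => f1 g * f2 g)
| mon_inv f : monomial f -> monomial (fun g => (f g)^-1)
| mon_ext f1 f2 : monomial f1 -> (forall g, f1 g = f2 g) -> monomial f2.

Definition homogeneous (gT : finGroupType) (n : nat)
    (m : {ffun 'I_n -> gT} -> gT) : Prop :=
  forall g : {ffun 'I_n -> gT}, (exists i, g i = 1) -> m g = 1.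

Definition pair2 (gT : finGroupType) (a b : gT) : {ffun 'I_2 -> gT} :=
  [ffun i : 'I_2 => if val i == 0%N then a else b].

Definition calG (gT : finGroupType) (I : Type) (X : (I -> gT) -> Prop)
    : (I -> gT) -> Prop :=
  fun h => X h
        \/ (forall i, h i = 1)
        \/ (exists x, X x /\ forall i, h i = (x i)^-1)
        \/ (exists x y, X x /\ X y /\ forall i, h i = x i * y i).

From mathcomp Require Import all_boot all_fingroup.
From mathcomp Require Import boolp classical_sets.
From Stdlib Require Cantor.

Set Implicit Arguments. Unset Strict Implicit. Unset Printing Implicit Defensive.
Local Open Scope group_scope.

(* Write e_S(x) for the element of G^I equal to x on S and to 1 off S.
   Homogeneity gives f(e_S(a), e_T(b)) = e_{S∩T}(b), and a monomial applied
   coordinatewise moves elements up only boundedly many stages. The heart of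
   the proof is that all e_S(b) lie in a single stage X_M. If not, splitting
   off pieces of ever higher stage yields pairwise disjoint E_k on each of
   which the e_R(b), R ⊆ E_k, have unbounded stage. Pick R_k ⊆ E_k beyond the
   stage that f(e_{E_k}(a), -) reaches from stage q_k + k, where e_{E_k}(a)
   lies in X_{q_k}, and let p be the stage of e_R(b) for R the union of the
   R_k: then e_{R_p}(b) = f(e_{E_p}(a), e_R(b)) lies in that stage after all.
   Finally N = (1 ∪ b^G)^n, so elements of N^I are products of boundedly
   many conjugates of such e_S(b). *)

Section Stages.
Variables (gT : finGroupType) (I : Type) (X : nat -> (I -> gT) -> Prop).
Hypothesis X_calG : forall m h, calG (X m) h -> X m.+1 h.
Hypothesis X_cover : forall h : I -> gT, exists m, X m h.

Lemma X_succ m h : X m h -> X m.+1 h.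
Proof. by move=> Xh; apply: X_calG; left. Qed.

Lemma X_le m n h : (m <= n)%N -> X m h -> X n h.
Proof.
move=> /subnK <-; elim: (n - m)%N => [|k IH] // Xh.
by rewrite addSn; apply/X_succ/IH.
Qed.

Lemma X_mul m1 m2 x y : X m1 x -> X m2 y ->
  X (maxn m1 m2).+1 (fun i => x i * y i).
Proof.
move=> Xx Xy; apply: X_calG; right; right; right.
exists x, y; split; first exact: X_le (leq_maxl _ _) Xx.
by split; first exact: X_le (leq_maxr _ _) Xy.
Qed.

Lemma X_inv m x : X m x -> X m.+1 (fun i => (x i)^-1).
Proof. by move=> Xx; apply: X_calG; right; right; left; exists x. Qed.

Lemma X_monomial n (f : {ffun 'I_n -> gT} -> gT) : monomial f ->
  forall m, exists m', forall u : 'I_n -> I -> gT,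
    (forall j, X m (u j)) -> X m' (fun i => f [ffun j => u j i]).
Proof.
elim=> {f} [c | j | f1 f2 _ IH1 _ IH2 | f1 _ IH | f1 f2 _ IH f12] m.
- by have [m' Xc] := X_cover (fun _ => c); exists m'.
- by exists m => u Xu; rewrite (funext (fun i => ffunE _ j)).
- have [m1 H1] := IH1 m; have [m2 H2] := IH2 m.
  by exists (maxn m1 m2).+1 => u Xu; apply: X_mul; [apply: H1 | apply: H2].
- by have [m1 H1] := IH m; exists m1.+1 => u Xu; apply/X_inv/H1.
- have [m1 H1] := IH m; exists m1 => u Xu.
  by rewrite -(funext (fun i => f12 _)); apply: H1.
Qed.

Lemma X_monomial2 (f : {ffun 'I_2 -> gT} -> gT) : monomial f ->
  forall m, exists m', forall u v, X m u -> X m v ->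
    X m' (fun i => f (pair2 (u i) (v i))).
Proof.
move=> /X_monomial mon m; have [m' Hm'] := mon m; exists m' => u v Xu Xv.
pose w (j : 'I_2) := if val j == 0%N then u else v.
have -> : (fun i => f (pair2 (u i) (v i))) = (fun i => f [ffun j => w j i]).
  by apply/funext => i; congr f; apply/ffunP => j; rewrite !ffunE /w; case: ifP.
by apply: Hm' => j; rewrite /w; case: ifP.
Qed.

Section Patterns.
Local Open Scope classical_set_scope.

Definition gindic (x : gT) (S : set I) : I -> gT :=
  fun i => if `[< S i >] then x else 1.

Lemma gindicU x R1 R2 : R1 `&` R2 = set0 ->
  gindic x (R1 `|` R2) = (fun i => gindic x R1 i * gindic x R2 i).
Proof.
move=> R12; apply/funext => i; rewrite /gindic.
case: (asboolP (R1 i)) => R1i; case: (asboolP (R2 i)) => R2i.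
- by have : (R1 `&` R2) i by []; rewrite R12.
- by rewrite asboolT ?mulg1 //; left.
- by rewrite asboolT ?mul1g //; right.
- by rewrite asboolF ?mulg1 // => -[].
Qed.

Lemma gindic_homogeneous (f : {ffun 'I_2 -> gT} -> gT) a b S T :
  homogeneous f -> f (pair2 a b) = b ->
  (fun i => f (pair2 (gindic a S i) (gindic b T i))) = gindic b (S `&` T).
Proof.
move=> homf fab; apply/funext => i; rewrite /gindic.
have f_1r x : f (pair2 x 1) = 1.
  by apply: homf; exists (@Ordinal 2 1 isT); rewrite ffunE.
have f_1l y : f (pair2 1 y) = 1.
  by apply: homf; exists (@Ordinal 2 0 isT); rewrite ffunE.
case: (asboolP (S i)) => Si; case: (asboolP (T i)) => Ti.
  by rewrite asboolT.
all: by rewrite asboolF ?f_1r ?f_1l // => -[].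
Qed.

Definition bounded_patterns (b : gT) (S : set I) :=
  exists M, forall R, R `<=` S -> X M (gindic b R).

Lemma bounded_patternsU b A B : bounded_patterns b A -> bounded_patterns b B ->
  bounded_patterns b (A `|` B).
Proof.
move=> [MA HA] [MB HB]; exists (maxn MA MB).+1 => R RAB.
rewrite -(setUIDK R A) gindicU; last by rewrite setDE setIACA setICr setI0.
apply: X_mul; first by apply: HA; apply: subIsetr.
by apply: HB => i [/RAB[]].
Qed.

Lemma unbounded_patterns_witness b S : ~ bounded_patterns b S ->
  forall M, exists R, R `<=` S /\ ~ X M (gindic b R).
Proof.
move=> Sunb M; apply: contrapT => noR; apply: Sunb; exists M => R RS.
by apply: contrapT => XR; apply: noR; exists R.
Qed.

Lemma unbounded_split b B n : ~ bounded_patterns b B ->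
  exists2 D, D `<=` B & ~ X n (gindic b D) /\ ~ bounded_patterns b (B `\` D).
Proof.
move=> Bunb; have [l Xl] := X_cover (gindic b B).
pose K := (maxn l n.+1).+1.
have [R [RB XRK]] := unbounded_patterns_witness Bunb K.
(* One of R, B `\` R stays unbounded and the other one is D: it escapes X n
   because R escapes X K and gindic b R = gindic b B * (gindic b (B `\` R))^-1. *)
have [Runb | BRunb] : ~ bounded_patterns b R \/ ~ bounded_patterns b (B `\` R).
  apply/not_andP => -[bR bBR]; apply: Bunb.
  by rewrite -(setDUK RB); apply: bounded_patternsU.
- exists (B `\` R); first exact: subDsetl.
  split; last by rewrite setDD setIidr.
  have gindicB : gindic b B = (fun i => gindic b R i * gindic b (B `\` R) i).
    by rewrite -gindicU ?setDUK ?setDIK.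
  have gindicR : gindic b R = (fun i => gindic b B i * (gindic b (B `\` R) i)^-1).
    by rewrite gindicB; apply/funext => i; rewrite mulgK.
  by move=> XBR; apply: XRK; rewrite gindicR; apply: X_mul Xl (X_inv XBR).
- exists R => //; split=> // XRn; apply: XRK; apply: X_le XRn.
  by rewrite leqW // leq_max leqnSn orbT.
Qed.

Lemma unbounded_disjoint_seq b (c : nat -> nat) :
  ~ bounded_patterns b setT ->
  exists D : nat -> set I,
    trivIset setT D /\ forall n, ~ X (c n) (gindic b (D n)).
Proof.
move=> Tunb.
have split_ex (Bn : set I * nat) : exists D, ~ bounded_patterns b Bn.1 ->
    [/\ D `<=` Bn.1, ~ X (c Bn.2) (gindic b D)
      & ~ bounded_patterns b (Bn.1 `\` D)].
  case: Bn => B n; have [bB | Bunb] := EM (bounded_patterns b B).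
    by exists set0.
  by have [D DB [XD BDunb]] := unbounded_split (c n) Bunb; exists D.
have [sp Hsp] := choice split_ex.
pose fix B n := if n is n'.+1 then B n' `\` sp (B n', n') else setT.
have Bunb n : ~ bounded_patterns b (B n).
  by elim: n => [|n IH] //=; case: (Hsp (B n, n) IH).
have B_decr m k : B (k + m)%N `<=` B m.
  elim: k => [|k IH] //; rewrite addSn /=.
  by apply: subset_trans IH; apply: subDsetl.
exists (fun n => sp (B n, n)); split=> [|n]; last first.
  by case: (Hsp (B n, n) (Bunb n)).
apply: ltn_trivIset => n m lt_mn; rewrite -subset0 => i [Dmi Dni].
have [DnB _ _] := Hsp (B n, n) (Bunb n).
have /= [_ []] // : B m.+1 i.
by apply: (B_decr m.+1 (n - m.+1)); rewrite subnK //; apply: DnB.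
Qed.

Lemma unbounded_disjoint_family b : ~ bounded_patterns b setT ->
  exists E : nat -> set I, trivIset setT E /\ forall k, ~ bounded_patterns b (E k).
Proof.
(* Each fibre of Cantor unpairing contains some D n escaping X M, for every M. *)
move=> /(unbounded_disjoint_seq (fun n => (Cantor.of_nat n).2)) [D [Dtriv XD]].
exists (fun k => \bigcup_(n in [set n | (Cantor.of_nat n).1 = k]) D n); split.
  move=> k l _ _ [i [[n /= <- Dni] [m /= <- Dmi]]].
  by rewrite (Dtriv n m) //; exists i.
move=> k [M HM]; apply: (XD (Cantor.to_nat (k, M))).
have kM := Cantor.cancel_of_to (k, M).
by rewrite kM; apply/HM/bigcup_sup; rewrite /= kM.
Qed.

Lemma disjoint_family_bounded (f : {ffun 'I_2 -> gT} -> gT) a b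
    (E : nat -> set I) :
  monomial f -> homogeneous f -> f (pair2 a b) = b -> trivIset setT E ->
  exists k, bounded_patterns b (E k).
Proof.
move=> monf homf fab Etriv; apply: contrapT => /forallNP Eunb.
have [q Xq] := choice (fun k => X_cover (gindic a (E k))).
have [phi Xphi] := choice (fun k => X_monomial2 monf (q k + k)).
have [R HR] := choice (fun k => unbounded_patterns_witness (Eunb k) (phi k)).
have [p Xp] := X_cover (gindic b (\bigcup_k R k)).
have [RpEp XRp] := HR p; apply: XRp.
have -> : R p = E p `&` \bigcup_k R k.
  apply/seteqP; split=> [i Rpi | i [Epi [k _ Rki]]].
    by split; [apply: RpEp | exists p].
  by rewrite -(Etriv k p) //; exists i; split=> //; apply: (HR k).1.
rewrite -(gindic_homogeneous _ _ homf fab); apply: Xphi.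
  exact: X_le (leq_addr _ _) (Xq p).
exact: X_le (leq_addl _ _) Xp.
Qed.

Lemma bounded_patterns_setT (f : {ffun 'I_2 -> gT} -> gT) a b :
  monomial f -> homogeneous f -> f (pair2 a b) = b -> bounded_patterns b setT.
Proof.
move=> monf homf fab; apply: contrapT.
move=> /unbounded_disjoint_family[E [Etriv Eunb]].
by have [k] := disjoint_family_bounded monf homf fab Etriv; apply: Eunb.
Qed.

End Patterns.

Definition bounded_values (K : {set gT}) :=
  exists M, forall h : I -> gT, (forall i, h i \in K) -> X M h.

Lemma bounded_valuesS (K K' : {set gT}) :
  K' \subset K -> bounded_values K -> bounded_values K'.
Proof.
by move=> /fintype.subsetP sK [M HM]; exists M => h hK; apply: HM => i; apply: sK.
Qed.

Lemma bounded_values1 : bounded_values 1.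
Proof. by exists 1%N => h h1; apply: X_calG; right; left => i; apply/set1P/h1. Qed.

Lemma bounded_valuesM (K1 K2 : {set gT}) :
  bounded_values K1 -> bounded_values K2 -> bounded_values (K1 * K2).
Proof.
move=> [M1 H1] [M2 H2]; exists (maxn M1 M2).+1 => h hK.
pose h1 i := odflt 1 [pick x in K1 | x^-1 * h i \in K2].
have h1P i : h1 i \in K1 /\ (h1 i)^-1 * h i \in K2.
  rewrite /h1; case: pickP => [x /andP[] // | none].
  case/mulsgP: (hK i) => x y xK yK hi.
  by have := none x; rewrite xK hi mulKg yK.
have -> : h = (fun i => h1 i * ((h1 i)^-1 * h i)).
  by apply/funext => i; rewrite mulKVg.
by apply: X_mul; [apply: H1 => i; case: (h1P i) | apply: H2 => i; case: (h1P i)].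
Qed.

Lemma bounded_valuesX (K : {set gT}) n :
  bounded_values K -> bounded_values (K ^+ n).
Proof.
move=> bK; elim: n => [|n IH]; first exact: bounded_values1.
by rewrite expgS; apply: bounded_valuesM.
Qed.

Lemma bounded_valuesJ (K : {set gT}) g :
  bounded_values K -> bounded_values (K :^ g).
Proof.
move=> [M HM]; have [l1 X1] := X_cover (fun _ => g^-1).
have [l2 X2] := X_cover (fun _ => g).
exists (maxn (maxn l1 M).+1 l2).+1 => h hK.
have -> : h = (fun i => g^-1 * (h i ^ g^-1) * g).
  by apply/funext => i; rewrite /conjg invgK !mulgA mulVg mul1g mulgKV.
by apply: X_mul X2; apply: X_mul X1 _; apply: HM => i; rewrite -mem_conjg.
Qed.

Lemma bounded_values_setU1 (A B : {set gT}) :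
  bounded_values (1 |: A) -> bounded_values (1 |: B) ->
  bounded_values (1 |: (A :|: B)).
Proof.
move=> bA bB; apply: bounded_valuesS (bounded_valuesM bA bB).
have /fintype.subsetP sA := mulg_subl (1 |: A) (setU11 1 B).
have /fintype.subsetP sB := mulg_subr (1 |: B) (setU11 1 A).
apply/fintype.subsetP => x; rewrite !inE => /or3P[/eqP-> | xA | xB].
- by apply: sA; rewrite setU11.
- by apply: sA; rewrite setU1r.
- by apply: sB; rewrite setU1r.
Qed.

Lemma bounded_values_pattern b :
  bounded_patterns b setT -> bounded_values [set 1; b].
Proof.
move=> [M HM]; exists M => h hb.
have -> : h = gindic b (fun i => h i = b).
  apply/funext => i; rewrite /gindic; case: asboolP => // hib.
  by have := hb i; rewrite !inE => /orP[/eqP | /eqP].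
exact: HM.
Qed.

Lemma bounded_values_normal_closure b :
  bounded_values [set 1; b] -> bounded_values <<b ^: [set: gT]>>.
Proof.
move=> b1; have [n ->] := gen_expgs (b ^: [set: gT]); apply: bounded_valuesX.
rewrite -class_support_set1l class_supportEr.
apply: (big_ind (fun A => bounded_values (1 |: A))).
- by rewrite finset.setU0; apply: bounded_values1.
- exact: bounded_values_setU1.
- move=> g _; have -> : 1 |: [set b] :^ g = [set 1; b] :^ g.
    by rewrite conjUg !conjg_set1 conj1g.
  exact: bounded_valuesJ.
Qed.

End Stages.

Theorem mainTheorem8 (gT : finGroupType) (I : Type)
  (f : {ffun 'I_2 -> gT} -> gT) (a b : gT)
  (X : nat -> (I -> gT) -> Prop) :
  monomial f -> homogeneous f -> f (pair2 a b) = b ->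
  (forall m h, X m h -> X m.+1 h) ->
  (forall m h, calG (X m) h -> X m.+1 h) ->
  (forall h : I -> gT, exists m, X m h) ->
  exists M : nat, forall m, (M <= m)%N ->
    forall h : I -> gT, (forall i, h i \in <<b ^: [set: gT]>>) -> X m h.
Proof.
move=> monf homf fab _ X_calG X_cover.
have /bounded_values_pattern b1 := bounded_patterns_setT X_calG X_cover monf homf fab.
have [M HM] := bounded_values_normal_closure X_calG X_cover b1.
by exists M => m Mm h hN; apply: (X_le X_calG Mm); apply: HM.
Qed.
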